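(* Let $n\ge3$ be odd and let $D\subseteq\{0,1,\dots,n-1\}$ with $|D|=2$. Then the unidirectional cycle $\overrightarrow{C_n}$ is $D$-antimagic.
   Context: An oriented graph is a simple graph each of whose edges is given one direction. For vertices $u,v$, $d(u,v)$ is the length of a shortest directed path from $u$ to $v$ ($d(u,u)=0$). For a set $D$ of nonnegative integers, $N_D(v)=\{y : d(v,y)\in D\}$; for a bijection $f:V\to\{1,\dots,|V|\}$, $\omega_D(v)=\sum_{x\in N_D(v)}f(x)$ (empty sum $0$); $f$ is $D$-antimagic if distinct vertices have distinct $D$-weights, and the graph is $D$-antimagic if such an $f$ exists. The unidirectional cycle $\overrightarrow{C_n}$ ($n\ge3$) has vertices $v_1,\dots,v_n$ and arcs $(v_i,v_{i+1})$ for $1\le i\le n-1$ and $(v_n,v_1)$; $d(v_i,v_j)=(j-i)\bmod n$. *)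

From mathcomp Require Import all_boot.
Set Implicit Arguments. Unset Strict Implicit. Unset Printing Implicit Defensive.

(* Unidirectional cycle C_n on vertices 'I_n (v_{i+1} is the ordinal i).
   Distance d(v_i, v_j) = (j - i) mod n, as stated in the paper. *)
Definition cycle_dist (n : nat) (u v : 'I_n) : nat := (v + n - u) %% n.

Definition nbhdD (n : nat) (D : {set 'I_n}) (v : 'I_n) : {set 'I_n} :=
  [set y | [exists k in D, cycle_dist v y == nat_of_ord k]].

(* A labeling f : V -> {1..n} is encoded as a bijection g : 'I_n -> 'I_n with
   f x = g x + 1. *)
Definition Dweight (n : nat) (D : {set 'I_n}) (g : 'I_n -> 'I_n) (v : 'I_n) : nat :=
  \sum_(x in nbhdD D v) (g x).+1.

Definition D_antimagic_labeling (n : nat) (D : {set 'I_n}) (g : 'I_n -> 'I_n) :=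
  bijective g /\ injective (Dweight D g).

Definition cycle_D_antimagic (n : nat) (D : {set 'I_n}) :=
  exists g : 'I_n -> 'I_n, D_antimagic_labeling D g.

From mathcomp Require Import all_boot zify.
Set Implicit Arguments. Unset Strict Implicit. Unset Printing Implicit Defensive.

(* Write D = {a, b} with a < b and d = b - a.  With u = v + a, the D-weight of v is
   f u + f (u + d) + 2, so we need a bijective labeling f of Z_n whose sums over the
   pairs {u, u + d} are pairwise distinct.  Translation by d splits Z_n into
   g = gcd(d, n) cycles of odd length m = n / g; block_place enumerates the q-th cycle
   as the q-th block of m consecutive integers, turning translation by d into the
   cyclic successor inside a block.  On a block, the zigzag labeling
   0, h, 1, h + 1, ..., (m - 1) / 2 with h = (m + 1) / 2 of an odd cycle has
   consecutive sums (m - 1) / 2 + (i + 1 mod m), which are distinct, and giving the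
   q-th block the labels qm, ..., qm + m - 1 separates the sums of different blocks. *)

Section Zigzag.
Variable m : nat.
Hypothesis m_odd : odd m.

Definition zigzag (i : nat) : nat := if odd i then m./2.+1 + i./2 else i./2.

Let m_eq : m = (m./2).*2.+1.
Proof. by rewrite -[LHS]odd_double_half m_odd. Qed.

Lemma zigzag_lt i : i < m -> zigzag i < m.
Proof.
rewrite /zigzag m_eq => lt_im; have := odd_double_half i.
by case: (odd i) => /= ei; lia.
Qed.

Lemma zigzag_inj i j : i < m -> j < m -> zigzag i = zigzag j -> i = j.
Proof.
rewrite /zigzag m_eq => lt_im lt_jm.
have := odd_double_half i; have := odd_double_half j.
by case: (odd i); case: (odd j) => /= ej ei; lia.
Qed.

Lemma zigzag_add_next i : i < m -> zigzag i + zigzag (i.+1 %% m) = m./2 + i.+1 %% m.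
Proof.
move=> lt_im; have [lt_i1m | Em] : i.+1 < m \/ i.+1 = m by lia.
- rewrite modn_small // /zigzag /=; have := odd_double_half i.
  by case: (odd i) => /= ei; lia.
- have even_i : odd i = false by move: m_odd; rewrite -Em /= => /negbTE.
  rewrite Em modnn /zigzag even_i /=.
  have := odd_double_half i; rewrite even_i /=; lia.
Qed.

End Zigzag.

Lemma eqn_modMr_coprime c m a b : coprime c m ->
  (a * c == b * c %[mod m]) = (a == b %[mod m]).
Proof.
move=> co_cm; wlog le_ba : a b / b <= a.
  by move=> sym; case: (leqP b a) => [/sym // | /ltnW /sym]; rewrite eq_sym [RHS]eq_sym.
rewrite !eqn_mod_dvd ?leq_mul2r ?le_ba ?orbT // -mulnBl.
by rewrite Gauss_dvdl // coprime_sym.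
Qed.

Definition cycle_shift n (u : 'I_n) (k : nat) : 'I_n :=
  Ordinal (ltn_pmod (u + k) (leq_ltn_trans (leq0n u) (ltn_ord u))).

Lemma cycle_shiftD n (u : 'I_n) k l : cycle_shift (cycle_shift u k) l = cycle_shift u (k + l).
Proof. by apply: val_inj; rewrite /= modnDml addnA. Qed.

Lemma cycle_shift_injl n k : injective (fun u : 'I_n => cycle_shift u k).
Proof. by move=> u1 u2 /(congr1 val) /eqP; rewrite /= eqn_modDr !modn_small // => /eqP /val_inj. Qed.

Lemma cycle_shift_injr n (u : 'I_n) : injective (fun k : 'I_n => cycle_shift u k).
Proof. by move=> k1 k2 /(congr1 val) /eqP; rewrite /= eqn_modDl !modn_small // => /eqP /val_inj. Qed.

Lemma invF_step_weight_inj (T : finType) (R : Type) (E : T -> T) (E_inj : injective E)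
    (next step : T -> T) (w : T -> T -> R) :
  {morph E : k / next k >-> step k} -> injective (fun k => w k (next k)) ->
  injective (fun u => w (invF E_inj u) (invF E_inj (step u))).
Proof.
move=> E_next w_inj u1 u2.
rewrite -[u1](f_invF E_inj) -[u2](f_invF E_inj) -!E_next !invF_f.
by move=> /w_inj ->.
Qed.

Section Blocks.
Variables n g m c : nat.
Hypotheses (m_odd : odd m) (co_cm : coprime c m) (gm : g * m = n).

Let m_gt0 : 0 < m := odd_gt0 m_odd.

Definition block_succ k := k %/ m * m + (k %% m).+1 %% m.
Definition block_label k := k %/ m * m + zigzag m (k %% m).
Definition block_place k := k %/ m + g * (k %% m * c %% m).

Let ltn_div_blocks k : k < n -> k %/ m < g.
Proof. by rewrite ltn_divLR // gm. Qed.

Let ltn_pmod_m k : k %% m < m. Proof. exact: ltn_pmod. Qed.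

Let divmod_inj k1 k2 : k1 %/ m = k2 %/ m -> k1 %% m = k2 %% m -> k1 = k2.
Proof. by move=> eq_div eq_mod; rewrite (divn_eq k1 m) (divn_eq k2 m) eq_div eq_mod. Qed.

Let divn_block q r : r < m -> (q * m + r) %/ m = q.
Proof. by move=> lt_rm; rewrite divnMDl // divn_small ?addn0. Qed.

Let modn_block q r : r < m -> (q * m + r) %% m = r.
Proof. by move=> lt_rm; rewrite modnMDl modn_small. Qed.

Let block_lt q r : q < g -> r < m -> q * m + r < n.
Proof. by rewrite -gm; nia. Qed.

Lemma block_succ_lt k : k < n -> block_succ k < n.
Proof. by move=> /ltn_div_blocks lt_q; apply: block_lt. Qed.

Lemma block_label_lt k : k < n -> block_label k < n.
Proof. by move=> /ltn_div_blocks lt_q; apply: block_lt; rewrite ?zigzag_lt. Qed.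

Lemma block_place_lt k : k < n -> block_place k < n.
Proof. by move=> /ltn_div_blocks; rewrite -gm /block_place; have := ltn_pmod_m (k %% m * c); nia. Qed.

Lemma block_label_inj : injective block_label.
Proof.
move=> k1 k2 eq_label; have eq_div : k1 %/ m = k2 %/ m.
  by have := congr1 (divn^~ m) eq_label; rewrite /= !divn_block ?zigzag_lt.
apply: divmod_inj => //; apply: (zigzag_inj m_odd) => //.
by move: eq_label; rewrite /block_label eq_div => /addnI.
Qed.

Let place_div_mod q x : q < g -> (q + g * x) %/ g = x /\ (q + g * x) %% g = q.
Proof.
move=> lt_qg; have g_gt0 : 0 < g by case: (g) lt_qg.
by rewrite addnC mulnC divnMDl // modnMDl divn_small ?modn_small ?addn0.
Qed.

Lemma block_place_inj k1 k2 : k1 < n -> k2 < n -> block_place k1 = block_place k2 -> k1 = k2.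
Proof.
move=> /ltn_div_blocks lt1 /ltn_div_blocks lt2; rewrite /block_place => eq_place.
have [x1 q1] := place_div_mod (k1 %% m * c %% m) lt1.
have [x2 q2] := place_div_mod (k2 %% m * c %% m) lt2.
apply: divmod_inj; first by rewrite -q1 -q2 eq_place.
have : k1 %% m * c == k2 %% m * c %[mod m] by rewrite -x1 -x2 eq_place.
by rewrite eqn_modMr_coprime // !modn_mod => /eqP.
Qed.

Let place_modn q x : q < g -> (q + g * x) %% n = q + g * (x %% m).
Proof.
move=> lt_qg; rewrite {1}(divn_eq x m) mulnDr addnCA mulnA mulnAC gm [n * _]mulnC modnMDl.
by rewrite modn_small // -gm; have := ltn_pmod_m x; nia.
Qed.

Lemma block_place_succ k : k < n -> (block_place k + g * c) %% n = block_place (block_succ k).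
Proof.
move=> /ltn_div_blocks lt_q.
rewrite /block_place /block_succ divn_block // modn_block // -addnA -mulnDr.
by rewrite place_modn // modnDml -mulSnr modnMml.
Qed.

Lemma block_label_add_succ k :
  block_label k + block_label (block_succ k) = k %/ m * m.*2 + (m./2 + (k %% m).+1 %% m).
Proof.
rewrite /block_label /block_succ divn_block // modn_block //.
by rewrite -zigzag_add_next //; lia.
Qed.

Lemma block_label_add_succ_inj : injective (fun k => block_label k + block_label (block_succ k)).
Proof.
move=> k1 k2 /=; rewrite !block_label_add_succ.
have lt_rest k : m./2 + (k %% m).+1 %% m < m.*2.
  by have := ltn_pmod_m (k %% m).+1; have := odd_double_half m; lia.
move=> eq_sum; have eq_div : k1 %/ m = k2 %/ m.
  have := congr1 (divn^~ m.*2) eq_sum.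
  by rewrite /= !divnMDl ?double_gt0 // (divn_small (lt_rest k1)) (divn_small (lt_rest k2)) !addn0.
move: eq_sum; rewrite eq_div => /addnI /addnI /eqP.
by rewrite -[(k1 %% m).+1]addn1 -[(k2 %% m).+1]addn1 eqn_modDr !modn_mod => /eqP; apply: divmod_inj.
Qed.

Definition block_place_ord (k : 'I_n) : 'I_n := Ordinal (block_place_lt (ltn_ord k)).
Definition block_label_ord (k : 'I_n) : 'I_n := Ordinal (block_label_lt (ltn_ord k)).
Definition block_succ_ord (k : 'I_n) : 'I_n := Ordinal (block_succ_lt (ltn_ord k)).

Lemma block_place_ord_inj : injective block_place_ord.
Proof. by move=> k1 k2 /(congr1 val) /(block_place_inj (ltn_ord _) (ltn_ord _)) /val_inj. Qed.

Definition block_labeling : 'I_n -> 'I_n := block_label_ord \o invF block_place_ord_inj.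

Lemma block_labeling_bij : bijective block_labeling.
Proof.
apply/injF_bij/inj_comp; last exact: can_inj (f_invF block_place_ord_inj).
by move=> k1 k2 /(congr1 val) /block_label_inj /val_inj.
Qed.

Lemma block_labeling_shift_add_inj :
  injective (fun u => block_labeling u + block_labeling (cycle_shift u (g * c))).
Proof.
apply: (invF_step_weight_inj (next := block_succ_ord)
  (w := fun k1 k2 => block_label_ord k1 + block_label_ord k2)) => [k | k1 k2 /= eq_sum].
  by apply: val_inj; rewrite /= block_place_succ.
exact/val_inj/(block_label_add_succ_inj eq_sum).
Qed.

End Blocks.

Lemma cycle_dist_eq_shift n (v y : 'I_n) (k : 'I_n) :
  (cycle_dist v y == k) = (y == cycle_shift v k).
Proof.
rewrite /cycle_dist -val_eqE /= -[X in _ == X](modn_small (ltn_ord k)).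
rewrite -(eqn_modDr v) subnK; last exact: ltnW (leq_trans (ltn_ord v) (leq_addl y n)).
by rewrite modnDr modn_small // addnC.
Qed.

Lemma nbhdD_pair n (a b v : 'I_n) :
  nbhdD [set a; b] v = [set cycle_shift v a; cycle_shift v b].
Proof.
apply/setP => y; rewrite !inE; apply/existsP/orP.
- by case=> k /andP[]; rewrite !inE cycle_dist_eq_shift => /orP[] /eqP ->; [left | right].
- by case=> eq_y; [exists a | exists b]; rewrite !inE eqxx ?orbT cycle_dist_eq_shift.
Qed.

Lemma Dweight_pair n (a b v : 'I_n) (f : 'I_n -> 'I_n) : a != b ->
  Dweight [set a; b] f v = (f (cycle_shift v a)).+1 + (f (cycle_shift v b)).+1.
Proof.
move=> neq_ab; rewrite /Dweight nbhdD_pair big_setU1 ?big_set1 //=.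
by rewrite inE (inj_eq (@cycle_shift_injr n v)).
Qed.

Theorem mainTheorem15 (n : nat) (D : {set 'I_n}) :
  3 <= n -> odd n -> #|D| = 2 -> cycle_D_antimagic D.
Proof.
move=> _ n_odd /eqP /cards2P [a [b [neq_ab ->]]].
wlog lt_ab : a b neq_ab / a < b.
  move=> sym; case: (ltngtP a b) => [||/val_inj eq_ab]; [exact: sym | | by rewrite eq_ab eqxx in neq_ab].
  by rewrite setUC; apply: sym; rewrite // eq_sym.
pose d := b - a; pose g := gcdn d n; pose m := n %/ g; pose c := d %/ g.
have g_gt0 : 0 < g by rewrite gcdn_gt0 (odd_gt0 n_odd) orbT.
have gm : g * m = n by rewrite mulnC divnK // dvdn_gcdr.
have gc : g * c = d by rewrite mulnC divnK // dvdn_gcdl.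
have m_odd : odd m by move: n_odd; rewrite -gm oddM => /andP[].
have co_cm : coprime c m.
  by rewrite /coprime -(eqn_pmul2r g_gt0) mul1n muln_gcdl ![_ * g]mulnC gm gc.
exists (block_labeling m_odd co_cm gm); split; first exact: block_labeling_bij.
move=> v1 v2; rewrite !Dweight_pair // -(subnKC (ltnW lt_ab)) -!cycle_shiftD -/d -gc.
move=> /eqP; rewrite !addSn !addnS !eqSS => /eqP /block_labeling_shift_add_inj.
exact: cycle_shift_injl.
Qed.
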